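(* For every integer $n \geq 2$, $$CB_{n+1}(t)=(n+1)B_n(t)+2(n+1)\sum_{i=1}^{n}(t-1)^i B_{n-i}(t).$$
   Context: For $\pi=[\pi_1,\ldots,\pi_n]\in S_n$ (one-line notation), a pair $(\pi_i,\pi_{i+1})$ with $1\le i\le n-1$ is a (regular) bond if $\pi_i-\pi_{i+1}=\pm1$. The pair $(\pi_n,\pi_1)$ is an edge bond if $\pi_n-\pi_1=\pm1$. A cyclic bond is a regular bond or an edge bond. Let $bnd(\pi)$ be the number of regular bonds and $cbnd(\pi)$ the number of cyclic bonds of $\pi$. Define $B_0(t)=CB_0(t)=1$ and for $n\ge1$: $B_n(t)=\sum_{\pi\in S_n}t^{bnd(\pi)}$ and $CB_n(t)=\sum_{\pi\in S_n}t^{cbnd(\pi)}$. By these definitions, each permutation of $S_2$ has $2$ cyclic bonds, so $CB_2(t)=2t^2$, while $B_1(t)=CB_1(t)=1$, $B_2(t)=2t$. *)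

From mathcomp Require Import all_boot all_order all_algebra all_fingroup.
Set Implicit Arguments. Unset Strict Implicit. Unset Printing Implicit Defensive.
Import GRing.Theory.
Local Open Scope ring_scope.

(* Values are 0-based (i.e. pi_i - 1); bonds only depend on differences. *)
Definition adjn (a b : nat) : bool := (a.+1 == b) || (b.+1 == a).

Definition oneline n (s : 'S_n) : seq nat := [seq val (s i) | i <- enum 'I_n].

Definition bnd_seq (l : seq nat) : nat :=
  if l is x :: t then count id (pairmap adjn x t) else 0.

Definition edge_seq (l : seq nat) : bool :=
  if l is x :: t then adjn (last x t) x else false.

Definition bnd n (s : 'S_n) : nat := bnd_seq (oneline s).
Definition cbnd n (s : 'S_n) : nat := bnd_seq (oneline s) + edge_seq (oneline s).

(* B_0 = CB_0 = 1 holds automatically (S_0 has one element, no bonds). *)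
Definition B (n : nat) : {poly int} := \sum_(s : 'S_n) 'X^(bnd s).
Definition CB (n : nat) : {poly int} := \sum_(s : 'S_n) 'X^(cbnd s).

(** Cyclic bonds are invariant under rotation of the one-line word, and every
    permutation of [S_(n+1)] is exactly one of the [n+1] rotations of a word
    [n :: t] with [t] a permutation word of [S_n]; so [CB (n+1)] is [n+1] times
    the generating polynomial of these words.  The cyclic bonds of [n :: t] are
    those of [t], plus one if [t] starts with [n-1] and one if it ends with
    [n-1] (not both, as [n >= 2]).  By reversal both extra terms contribute
    [(t-1) Bmax n], where [Bmax m] counts the words of [S_m] starting with
    their largest letter; removing that letter gives
    [Bmax (m+1) = B m + (t-1) Bmax m], which unfolds to
    [(t-1) Bmax n = sum_(i=1..n) (t-1)^i B (n-i)]. *)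
From mathcomp Require Import all_boot all_order all_algebra all_fingroup.
From mathcomp Require Import zify ring.
Import GRing.Theory.

Definition perm_seqs (m : nat) : seq (seq nat) := permutations (iota 0 m).

Lemma mem_perm_seqs m l : (l \in perm_seqs m) = perm_eq l (iota 0 m).
Proof. exact: mem_permutations. Qed.

Lemma perm_seqsP m l : l \in perm_seqs m ->
  [/\ size l = m, uniq l & forall x, x \in l -> (x < m)%N].
Proof.
rewrite mem_perm_seqs => pl; split.
- by rewrite (perm_size pl) size_iota.
- by rewrite (perm_uniq pl) iota_uniq.
- by move=> x; rewrite (perm_mem pl) mem_iota.
Qed.

Lemma uniq_perm_seqs m : uniq (perm_seqs m).
Proof. exact: permutations_uniq. Qed.

Lemma perm_seqs_cons m t : (m :: t \in perm_seqs m.+1) = (t \in perm_seqs m).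
Proof.
have rot_m : perm_eq (iota 0 m ++ [:: m]) (m :: iota 0 m) by rewrite perm_catC.
by rewrite !mem_perm_seqs -addn1 iotaD /= (permPr rot_m) perm_cons.
Qed.

Lemma nth_oneline m (s : 'S_m) (i : 'I_m) : nth 0%N (oneline s) i = val (s i).
Proof. by rewrite /oneline (nth_map i) ?size_enum_ord // nth_ord_enum. Qed.

Lemma size_oneline m (s : 'S_m) : size (oneline s) = m.
Proof. by rewrite size_map size_enum_ord. Qed.

Lemma oneline_inj m : injective (@oneline m).
Proof.
by move=> s t st; apply/permP => i; apply: val_inj; rewrite -!nth_oneline st.
Qed.

Lemma oneline_perm_seqs m (s : 'S_m) : oneline s \in perm_seqs m.
Proof.
rewrite mem_perm_seqs -val_enum_ord /oneline (map_comp val s) perm_map //.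
apply: uniq_perm; rewrite ?(map_inj_uniq (@perm_inj _ s)) ?enum_uniq //.
move=> x; rewrite mem_enum; apply/mapP; exists (s^-1 x)%g; rewrite ?mem_enum //.
by rewrite permKV.
Qed.

Lemma oneline_onto m l : l \in perm_seqs m -> exists s : 'S_m, oneline s = l.
Proof.
case/perm_seqsP => szl ul ltl.
have lt_nth (i : 'I_m) : (nth 0%N l i < m)%N by rewrite ltl // mem_nth ?szl.
pose f i := Ordinal (lt_nth i).
have f_inj : injective f.
  move=> i j /(congr1 val) /= /eqP; rewrite nth_uniq ?szl // => /eqP.
  exact: val_inj.
exists (perm f_inj); apply: (@eq_from_nth _ 0%N); rewrite size_oneline ?szl //.
by move=> i im; rewrite (nth_oneline _ _ (Ordinal im)) permE.
Qed.

Lemma big_oneline (R : nmodType) m (F : seq nat -> R) :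
  (\sum_(s : 'S_m) F (oneline s) = \sum_(l <- perm_seqs m) F l)%R.
Proof.
transitivity (\sum_(l <- map (@oneline m) (enum 'S_m)) F l)%R.
  by rewrite big_map enumT.
apply: perm_big; apply: uniq_perm.
- by rewrite (map_inj_uniq (@oneline_inj m)) enum_uniq.
- exact: uniq_perm_seqs.
move=> l; apply/mapP/idP => [[s _ ->]|]; first exact: oneline_perm_seqs.
by case/oneline_onto => s <-; exists s; rewrite ?mem_enum.
Qed.

Definition cbnd_seq (l : seq nat) : nat := bnd_seq l + edge_seq l.

Lemma adjnC a b : adjn a b = adjn b a.
Proof. by rewrite /adjn orbC. Qed.

Lemma adjn_lt m y : (y < m)%N -> adjn m y = (y == m.-1).
Proof. by rewrite /adjn; lia. Qed.

Lemma bnd_seq_cons2 x y t : bnd_seq [:: x, y & t] = adjn x y + bnd_seq (y :: t).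
Proof. by []. Qed.

Lemma bnd_seq_rcons2 s y x :
  bnd_seq (rcons (rcons s y) x) = bnd_seq (rcons s y) + adjn y x.
Proof.
case: s => [|z s] /=; first by rewrite addn0.
by rewrite -cats1 pairmap_cat count_cat last_rcons /= addn0.
Qed.

Lemma bnd_seq_rev l : bnd_seq (rev l) = bnd_seq l.
Proof.
elim: l => [|x [|y u] IH] //.
by rewrite rev_cons rev_cons bnd_seq_rcons2 -rev_cons IH adjnC addnC.
Qed.

Lemma cbnd_seq_rot1 l : cbnd_seq (rot 1 l) = cbnd_seq l.
Proof.
case: l => [|x [|y u]] //; rewrite rot1_cons /cbnd_seq bnd_seq_cons2.
rewrite [y :: u]lastI bnd_seq_rcons2 -lastI [edge_seq _]/= last_rcons.
by rewrite addnC addnA.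
Qed.

Lemma cbnd_seq_rot k l : (k <= size l)%N -> cbnd_seq (rot k l) = cbnd_seq l.
Proof.
elim: k => [|k IH] kl; first by rewrite rot0.
by rewrite -add1n rotD // cbnd_seq_rot1 IH // ltnW.
Qed.

Lemma perm_map_perm_seqs m (f : seq nat -> seq nat) :
  injective f -> (forall l, perm_eq (f l) l) ->
  perm_eq (map f (perm_seqs m)) (perm_seqs m).
Proof.
move=> f_inj f_perm.
have uniq_fP : uniq (map f (perm_seqs m)).
  by rewrite map_inj_uniq ?uniq_perm_seqs.
apply: uniq_perm; rewrite ?uniq_perm_seqs //.
apply: (uniq_min_size uniq_fP _ _).2; last by rewrite size_map.
move=> _ /mapP[l lP ->].
by rewrite mem_perm_seqs (permPl (f_perm l)) -mem_perm_seqs.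
Qed.

Lemma big_perm_seqs_map (R : nmodType) m (f : seq nat -> seq nat)
    (P : pred (seq nat)) (F : seq nat -> R) :
  injective f -> (forall l, perm_eq (f l) l) ->
  (\sum_(l <- perm_seqs m | P (f l)) F (f l)
    = \sum_(l <- perm_seqs m | P l) F l)%R.
Proof.
by move=> f_inj f_perm; rewrite -big_map; apply/perm_big/perm_map_perm_seqs.
Qed.

Lemma big_perm_seqs_rev (R : nmodType) m (P : pred (seq nat))
    (F : seq nat -> R) :
  (\sum_(l <- perm_seqs m | P (rev l)) F (rev l)
    = \sum_(l <- perm_seqs m | P l) F l)%R.
Proof.
by apply: big_perm_seqs_map => [|l]; [exact: (can_inj revK)|rewrite perm_rev].
Qed.

Lemma big_perm_seqs_head (R : nmodType) m (F : seq nat -> R) :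
  (\sum_(l <- perm_seqs m.+1 | head 0%N l == m) F l
    = \sum_(t <- perm_seqs m) F (m :: t))%R.
Proof.
rewrite -big_filter -(big_map (cons m) xpredT); apply: perm_big.
have cons_inj : injective (cons m) by move=> ? ? [].
apply: uniq_perm.
- by rewrite filter_uniq ?uniq_perm_seqs.
- by rewrite (map_inj_uniq cons_inj) uniq_perm_seqs.
move=> l; rewrite mem_filter; apply/andP/mapP => [[/eqP]|[t tP ->]].
  case: l => [_ /perm_seqsP[]//|x t /= -> lP].
  by exists t; rewrite // -perm_seqs_cons.
by rewrite perm_seqs_cons.
Qed.

Lemma head_rot (T : Type) (x0 : T) k (l : seq T) :
  (k < size l)%N -> head x0 (rot k l) = nth x0 l k.
Proof.
by move=> kl; rewrite -nth0 nth_cat size_drop subn_gt0 kl nth_drop addn0.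
Qed.

(* Every word has its letter [n] at exactly one position [k], and rotating by
   [k] brings it to the front. *)
Lemma big_perm_seqs_rot (R : nmodType) n (g : seq nat -> R) :
    (forall l k, l \in perm_seqs n.+1 -> (k <= n)%N -> g (rot k l) = g l) ->
  (\sum_(l <- perm_seqs n.+1) g l
    = (\sum_(l <- perm_seqs n.+1 | head 0%N l == n) g l) *+ n.+1)%R.
Proof.
move=> g_rot.
have one_max_pos l : l \in perm_seqs n.+1 ->
    (g l = \sum_(k < n.+1 | nth 0%N l k == n) g l)%R.
  move=> lP; have [szl ul _] := perm_seqsP _ _ lP.
  have nl : n \in l.
    by rewrite mem_perm_seqs in lP; rewrite (perm_mem lP) mem_iota add0n ltnSn.
  have il : (index n l < n.+1)%N by rewrite -szl index_mem.
  rewrite (big_pred1 (Ordinal il)) // => k /=.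
  apply/eqP/eqP => [nth_k|->]; last by rewrite nth_index.
  by apply: val_inj; rewrite /= -[in index n l]nth_k index_uniq ?szl.
rewrite (eq_big_seq _ one_max_pos).
under eq_bigr do rewrite big_mkcond.
rewrite exchange_big -[X in GRing.natmul _ X]card_ord -sumr_const.
apply: eq_bigr => k _.
have rot_perm (l : seq nat) : perm_eq (rot k l) l by rewrite perm_rot.
rewrite -big_mkcond -(big_perm_seqs_map _ _ _ (fun l => head 0%N l == n) _
  (@rot_inj _ _) rot_perm).
rewrite big_seq_cond [RHS]big_seq_cond; apply: eq_big => l.
  have [lP|//] := boolP (l \in perm_seqs n.+1).
  by have [szl _ _] := perm_seqsP _ _ lP; rewrite /= head_rot ?szl.
by case/andP=> lP _; rewrite g_rot // -ltnS.
Qed.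

Local Open Scope ring_scope.

Lemma B_perm_seqs m : B m = \sum_(t <- perm_seqs m) 'X^(bnd_seq t).
Proof. by rewrite /B -big_oneline. Qed.

Lemma CB_perm_seqs m : CB m = \sum_(l <- perm_seqs m) 'X^(cbnd_seq l).
Proof. by rewrite /CB -big_oneline. Qed.

Lemma B0 : B 0 = 1.
Proof. by rewrite B_perm_seqs /perm_seqs /= big_seq1 expr0. Qed.

Definition Bmax (m : nat) : {poly int} :=
  \sum_(t <- perm_seqs m | head 0%N t == m.-1) 'X^(bnd_seq t).

Lemma Bmax1 : Bmax 1 = 1.
Proof. by rewrite /Bmax /perm_seqs /= big_mkcond big_seq1 /= expr0. Qed.

Lemma Bmax_rev m :
  \sum_(t <- perm_seqs m | last 0%N t == m.-1) 'X^(bnd_seq t) = Bmax m.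
Proof.
rewrite -big_perm_seqs_rev /Bmax.
apply: eq_big => t; last by rewrite bnd_seq_rev.
by case: t => [|x t] //; rewrite rev_cons last_rcons.
Qed.

Lemma Bmax_rec m : (0 < m)%N -> Bmax m.+1 = B m + ('X - 1) * Bmax m.
Proof.
move=> m_gt0; rewrite /Bmax big_perm_seqs_head B_perm_seqs mulr_sumr.
rewrite [X in _ + X]big_mkcond -big_split.
apply: eq_big_seq => -[|y u] tP.
  by move: m_gt0; have [<-] := perm_seqsP _ _ tP.
have [_ _ lt_m] := perm_seqsP _ _ tP.
rewrite bnd_seq_cons2 adjn_lt ?lt_m ?mem_head //=.
by case: (y == m.-1); rewrite ?addn0 ?mulr0 ?addr0 // addnC exprD expr1; ring.
Qed.

Lemma sum_B_Bmax m : (0 < m)%N ->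
  \sum_(1 <= i < m.+1) ('X - 1) ^+ i * B (m - i) = ('X - 1) * Bmax m.
Proof.
elim: m => // -[_ _|m IH _].
  by rewrite big_nat1 Bmax1 subnn B0 expr1 !mulr1.
rewrite big_nat_recl // subn1 /= Bmax_rec //.
under eq_bigr do rewrite subSS exprS -mulrA.
by rewrite -mulr_sumr IH //; ring.
Qed.

Lemma exprD_excl (R : comPzRingType) (x : R) a (b c : bool) : ~~ (b && c) ->
  x ^+ (a + b + c) = x ^+ a + (x - 1) * (if b then x ^+ a else 0)
                            + (x - 1) * (if c then x ^+ a else 0).
Proof. by case: b c => -[] //= _; rewrite ?addn0 ?addn1 ?exprS; ring. Qed.

Lemma cbnd_seq_max_cons n t : (2 <= n)%N -> t \in perm_seqs n ->
  cbnd_seq (n :: t) = (bnd_seq t + (head 0 t == n.-1) + (last 0 t == n.-1))%N.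
Proof.
move=> n_ge2 tP; have [szt _ lt_n] := perm_seqsP _ _ tP.
case: t tP szt lt_n => [|y u] tP szt lt_n; first by move: n_ge2; rewrite -szt.
rewrite /cbnd_seq bnd_seq_cons2 [edge_seq _]/= (adjnC (last _ _)).
rewrite !adjn_lt ?lt_n ?mem_head ?mem_last //=.
by congr (_ + _)%N; rewrite addnC.
Qed.

Lemma head_neq_last (T : eqType) (x0 : T) t :
  uniq t -> (1 < size t)%N -> head x0 t != last x0 t.
Proof.
case: t => [|y [|z u]] //= ut _; apply: contraTneq ut => ->.
by rewrite /= mem_last.
Qed.

Theorem theorem2p1 (n : nat) (hn : (2 <= n)%N) :
  CB n.+1 = (n.+1)%:R * B n
            + 2%:R * (n.+1)%:R * \sum_(1 <= i < n.+1) ('X - 1) ^+ i * B (n - i).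
Proof.
have max_head_last t : t \in perm_seqs n ->
    ~~ ((head 0%N t == n.-1) && (last 0%N t == n.-1)).
  case/perm_seqsP => szt ut _; have := head_neq_last _ 0%N _ ut.
  rewrite szt => /(_ hn); apply: contraTN.
  by case/andP => /eqP-> /eqP->; rewrite eqxx.
rewrite CB_perm_seqs big_perm_seqs_rot; last first.
  move=> l k lP kn; have [szl _ _] := perm_seqsP _ _ lP.
  by rewrite cbnd_seq_rot ?szl ?leqW.
rewrite big_perm_seqs_head.
under eq_big_seq => t tP do
  rewrite cbnd_seq_max_cons // exprD_excl ?max_head_last //.
rewrite !big_split /= -!mulr_sumr -!big_mkcond Bmax_rev -B_perm_seqs -/(Bmax n).
by rewrite sum_B_Bmax ?(leq_trans _ hn) // -mulr_natl; ring.
Qed.
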